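(* Let $r\ge1$, $\alpha\ge1$, and let $Y_1,\dots,Y_k$ be i.i.d. nonnegative random variables with $\|Y_1\|_{2r}\le\alpha\|Y_1\|_r$. If $k\ge 4\alpha^{2r}$, then \[ \mathbb{E}\Bigl(\sum_{i=1}^k Y_i^r\Bigr)^{1/r}\ge\frac{1}{128\alpha^2}\,k^{1/r}\|Y_1\|_r . \]
   Context: $\|Y\|_\rho=(\mathbb{E}|Y|^\rho)^{1/\rho}$. *)

From HB Require Import structures.
From mathcomp Require Import all_boot all_order all_algebra.
From mathcomp Require Import all_classical all_reals all_analysis.
Set Implicit Arguments. Unset Strict Implicit. Unset Printing Implicit Defensive.
Import Order.TTheory GRing.Theory Num.Theory.
Local Open Scope classical_set_scope.
Local Open Scope ring_scope.

Definition mutually_independent d (T : measurableType d) (R : realType)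
  (P : probability T R) (k : nat) (Y : 'I_k -> {RV P >-> R}) : Prop :=
  forall (J : {set 'I_k}) (B : 'I_k -> set R),
    (forall i, measurable (B i)) ->
    P (\bigcap_(i in [set j | j \in J]) (Y i @^-1` B i)) =
    (\prod_(i in J) P (Y i @^-1` B i))%E.

Definition identically_distributed d (T : measurableType d) (R : realType)
  (P : probability T R) (k : nat) (Y : 'I_k -> {RV P >-> R}) : Prop :=
  forall (i j : 'I_k) (A : set R), measurable A ->
    distribution P (Y i) A = distribution P (Y j) A.

Definition rnorm d (T : measurableType d) (R : realType)
  (P : probability T R) (rho : R) (Y : T -> R) : \bar R :=
  Lnorm P rho%:E (EFin \o Y).

From HB Require Import structures.
From mathcomp Require Import all_boot all_order all_algebra.
From mathcomp Require Import all_classical all_reals all_analysis.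
From mathcomp Require Import measurable_realfun.
From mathcomp Require Import ring lra.
Import Order.TTheory GRing.Theory Num.Theory.
Local Open Scope classical_set_scope.
Local Open Scope ring_scope.

(* Put Z = sum_i Y_i^r and a = E Z = k E Y^r.  Integrating the pointwise
   inequality z <= a^(1 - 1/r) z^(1/r) + z^2 / (4 a) gives
   a <= a^(1 - 1/r) E Z^(1/r) + E Z^2 / (4 a).  By independence
   E Z^2 <= k E Y^(2r) + a^2, and the moment comparison together with
   k >= 4 alpha^(2r) bounds k E Y^(2r) by a^2 / 4.  Hence
   E Z^(1/r) >= (11/16) a^(1/r) = (11/16) k^(1/r) ||Y||_r, which is more than
   the claimed constant 1 / (128 alpha^2). *)

Section real_inequalities.
Context {R : realType}.

Lemma le_powR_inv_add_sqr (u r : R) : 0 <= u -> 1 <= r ->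
  u <= u `^ r^-1 + u * u / 4.
Proof.
move=> u0 r1; have r0 : 0 < r by apply: lt_le_trans r1.
have [u1|u1] := leP u 1.
- have [->|u_neq0] := eqVneq u 0; first by rewrite mul0r mul0r addr0 powR_ge0.
  have : u <= u `^ r^-1.
    apply: ger1_powR; first by rewrite u1 andbT lt_neqAle eq_sym u_neq0 u0.
    by rewrite invf_le1.
  by move/le_trans; apply; rewrite lerDl divr_ge0 // mulr_ge0.
- have : 1 <= u `^ r^-1.
    have := @ge0_ler_powR R r^-1 (ltW (_ : 0 < r^-1)) 1 u.
    by rewrite powR1; apply; rewrite ?nnegrE ?(ltW u1) ?invr_gt0.
  have := sqr_ge0 (u - 2); rewrite expr2; nra.
Qed.

Lemma le_powR_inv_add_sqr_scaled (z a r : R) : 0 <= z -> 0 < a -> 1 <= r ->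
  z <= a / a `^ r^-1 * z `^ r^-1 + (4 * a)^-1 * (z * z).
Proof.
move=> z0 a0 r1.
pose u := z / a.
have u0 : 0 <= u by rewrite divr_ge0 // ltW.
have -> : z = a * u by rewrite /u mulrC divfK // gt_eqF.
rewrite powRM ?(ltW a0) // mulrA divfK ?gt_eqF ?powR_gt0 //.
have := ler_wpM2l (ltW a0) (le_powR_inv_add_sqr u r u0 r1); move/le_trans; apply.
by rewrite mulrDr lerD2l le_eqVlt; apply/orP; left; apply/eqP; field; rewrite gt_eqF.
Qed.

Lemma powR_le_sqr_of_powR_inv_le {s m alpha r : R} :
  0 <= s -> 0 <= m -> 0 <= alpha -> 0 < r ->
  s `^ (2 * r)^-1 <= alpha * m `^ r^-1 -> s <= alpha `^ (2 * r) * (m * m).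
Proof.
move=> s0 m0 a0 r0 hsm.
have r2 : 2 * r != 0 by rewrite mulf_neq0 // gt_eqF.
have -> : s = (s `^ (2 * r)^-1) `^ (2 * r).
  by rewrite -powRrM mulrC divff // powRr1.
have -> : m * m = (m `^ r^-1) `^ (2 * r).
  rewrite -powRrM mulrCA [r^-1 * r]mulrC divff ?gt_eqF // mulr1.
  by rewrite powR_mulrn // expr2.
rewrite -powRM ?powR_ge0 //.
by apply: ge0_ler_powR; rewrite ?nnegrE ?mulr_ge0 ?powR_ge0 ?(ltW r0).
Qed.

Lemma second_moment_sum_le {k s m A : R} : 0 <= k ->
  s <= A * (m * m) -> 4 * A <= k ->
  k * s + k * k * (m * m) <= 5 / 4 * (k * m * (k * m)).
Proof.
move=> k0 s_le k_large.
have ks_le : k * s <= k * (A * (m * m)) by rewrite ler_wpM2l.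
have := ler_wpM2r (mulr_ge0 k0 (_ : 0 <= m * m)) k_large.
by rewrite -expr2 sqr_ge0 => /(_ isT); nra.
Qed.

Lemma inv_128_sqr_le (alpha : R) : 1 <= alpha ->
  (128 * alpha ^+ 2)^-1 <= 1 - 5 / 4 / 4.
Proof.
move=> a1; have alpha2_ge1 : 1 <= alpha ^+ 2 by rewrite expr_ge1 // (le_trans ler01).
by rewrite -div1r ler_pdivrMr ?mulr_gt0 ?(lt_le_trans ltr01 alpha2_ge1) //; lra.
Qed.

End real_inequalities.

Section independence.
Context {d : measure_display} {T : measurableType d} {R : realType}.
Context {P : probability T R} {k : nat} {Y : 'I_k -> {RV P >-> R}}.

Lemma mutually_independent_pair (i j : 'I_k) (A B : set R) :
  mutually_independent Y -> i != j -> measurable A -> measurable B ->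
  P (Y i @^-1` A `&` Y j @^-1` B) = (P (Y i @^-1` A) * P (Y j @^-1` B))%E.
Proof.
move=> Y_indep ij mA mB.
have := Y_indep [set i; j]%SET (fun l => if l == i then A else B).
rewrite big_setU1 ?inE //= ?big_set1 eqxx eq_sym (negbTE ij).
move=> <-; last by move=> l; case: ifP.
congr (P _); apply/seteqP; split => w.
- move=> [HA HB] l /=; rewrite !inE => /orP[] /eqP ->; first by rewrite eqxx.
  by rewrite eq_sym (negbTE ij).
- move=> H; split.
  + by have := H i; rewrite /= !inE eqxx /=; apply.
  + by have := H j; rewrite /= !inE eqxx orbT eq_sym (negbTE ij); apply.
Qed.

(* The joint law of [(Y i, Y j)] agrees with the product of the marginals on
   rectangles, hence everywhere; conclude by Fubini-Tonelli. *)
Lemma ge0_integral_indepM (i j : 'I_k) (phi psi : R -> R) :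
  mutually_independent Y -> i != j ->
  measurable_fun setT phi -> measurable_fun setT psi ->
  (forall x, 0 <= phi x) -> (forall x, 0 <= psi x) ->
  (\int[P]_w (phi (Y i w) * psi (Y j w))%:E =
   \int[P]_w (phi (Y i w))%:E * \int[P]_w (psi (Y j w))%:E)%E.
Proof.
move=> Y_indep ij mphi mpsi phi0 psi0.
have mYij : measurable_fun setT (fun w => (Y i w, Y j w)).
  exact: measurable_fun_pair.
pose h := fun z : (R * R)%type => (phi z.1 * psi z.2)%:E.
have mh : measurable_fun [set: (R * R)%type] h.
  apply/measurable_EFinP/measurable_funM.
  - exact: measurableT_comp mphi measurable_fst.
  - exact: measurableT_comp mpsi measurable_snd.
have h0 z : (0 <= h z)%E by rewrite lee_fin mulr_ge0.
transitivity (\int[pushforward P (fun w => (Y i w, Y j w))]_z h z)%E.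
  by rewrite ge0_integral_pushforward //= preimage_setT.
transitivity (\int[distribution P (Y i) \x distribution P (Y j)]_z h z)%E.
  apply: eq_measure_integral => A mA _.
  apply/esym; apply: product_measure_unique => // A1 B1 mA1 mB1.
  exact: mutually_independent_pair.
rewrite fubini_tonelli1 //.
transitivity (\int[distribution P (Y i)]_x
    ((phi x)%:E * \int[distribution P (Y j)]_y (psi y)%:E))%E.
  apply: eq_integral => x _; rewrite /fubini_F /h /=.
  under eq_integral do rewrite EFinM.
  rewrite ge0_integralZl_EFin //.
  - by move=> y _; rewrite lee_fin.
  - exact/measurable_EFinP.
rewrite ge0_integralZr //; last 3 first.
- exact/measurable_EFinP.
- by move=> y _; rewrite lee_fin.
- by apply: integral_ge0 => y _; rewrite lee_fin.
by rewrite !ge0_integral_distribution //; exact/measurable_EFinP.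
Qed.

Lemma ge0_integral_ident_distr (i j : 'I_k) (phi : R -> R) :
  identically_distributed Y -> measurable_fun setT phi ->
  (forall x, 0 <= phi x) ->
  (\int[P]_w (phi (Y i w))%:E = \int[P]_w (phi (Y j w))%:E)%E.
Proof.
move=> Y_ident mphi phi0.
have mphiE : measurable_fun setT (EFin \o phi) by exact/measurable_EFinP.
have phiE0 x : (0 <= (EFin \o phi) x)%E by rewrite lee_fin.
rewrite -(ge0_integral_distribution (Y i) mphiE phiE0).
rewrite -(ge0_integral_distribution (Y j) mphiE phiE0).
by apply: eq_measure_integral => A mA _; exact: Y_ident.
Qed.

End independence.

Section rnorm.
Context {d : measure_display} {T : measurableType d} {R : realType}.
Context {P : probability T R}.

Lemma rnorm_ge0E (p : R) (X : T -> R) : p != 0 -> (forall x, 0 <= X x) ->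
  rnorm P p X = ((\int[P]_x (X x `^ p)%:E) `^ p^-1)%E.
Proof.
move=> p0 X0; rewrite /rnorm unlock /Lnorm; congr (_ `^ _)%E.
by apply: eq_integral => x _; rewrite -[(EFin \o X) x]/((X x)%:E) abse_EFin ger0_norm.
Qed.

Lemma rnorm_ge0_EFin {p m : R} {X : T -> R} : p != 0 -> (forall x, 0 <= X x) ->
  (\int[P]_x (X x `^ p)%:E = m%:E)%E -> rnorm P p X = (m `^ p^-1)%:E.
Proof. by move=> p0 X0 Xp; rewrite rnorm_ge0E // Xp poweR_EFin. Qed.

Lemma rnorm_ge0_lty {p : R} {X : T -> R} : p != 0 -> (forall x, 0 <= X x) ->
  (rnorm P p X < +oo)%E -> (\int[P]_x (X x `^ p)%:E < +oo)%E.
Proof.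
move=> p0 X0; rewrite rnorm_ge0E // !ltey; apply: contra_neq => ->.
by rewrite poweRyr // invr_neq0.
Qed.

End rnorm.

Section moments.
Context {d : measure_display} {T : measurableType d} {R : realType}.
Context {mu : {measure set T -> \bar R}}.

Lemma ge0_integral_sum_cst {k} {f : 'I_k -> T -> R} {m : R} :
  (forall i, measurable_fun setT (f i)) -> (forall i x, 0 <= f i x) ->
  (forall i, \int[mu]_x (f i x)%:E = m%:E)%E ->
  (\int[mu]_x (\sum_(i < k) f i x)%:E = (k%:R * m)%:E)%E.
Proof.
move=> mf f0 fE; under eq_integral do rewrite -sumEFin.
rewrite ge0_integral_sum //; last 2 first.
- by move=> i; exact/measurable_EFinP.
- by move=> i x _; rewrite lee_fin.
under eq_bigr do rewrite fE.
by rewrite sumEFin sumr_const card_ord mulr_natl.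
Qed.

Lemma ge0_integral_sum_sqr_le {k} {f : 'I_k -> T -> R} {m s : R} :
  (forall i, measurable_fun setT (f i)) -> (forall i x, 0 <= f i x) ->
  (forall i j, \int[mu]_x (f i x * f j x)%:E <= ((i == j)%:R * s + m * m)%:E)%E ->
  (\int[mu]_x ((\sum_(i < k) f i x) * (\sum_(i < k) f i x))%:E <=
   (k%:R * s + k%:R * k%:R * (m * m))%:E)%E.
Proof.
move=> mf f0 fE.
have mff i j : measurable_fun setT (fun x => f i x * f j x).
  exact: measurable_funM.
under eq_integral do rewrite mulr_suml.
under eq_integral do under eq_bigr do rewrite mulr_sumr.
under eq_integral do rewrite -sumEFin.
rewrite ge0_integral_sum //; last 2 first.
- by move=> i; apply/measurable_EFinP; exact: measurable_sum.
- by move=> i x _; rewrite lee_fin sumr_ge0 // => j _; rewrite mulr_ge0.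
apply: (@le_trans _ _ (\sum_(i < k) \sum_(j < k)
    ((i == j)%:R * s + m * m)%:E)%E).
  apply: lee_sum => i _; under eq_integral do rewrite -sumEFin.
  rewrite ge0_integral_sum //; last 2 first.
  - by move=> j; exact/measurable_EFinP.
  - by move=> j x _; rewrite lee_fin mulr_ge0.
  by apply: lee_sum => j _; exact: fE.
have row (i : 'I_k) : \sum_(j < k) ((i == j)%:R * s + m * m) =
    s + k%:R * (m * m).
  rewrite big_split /= -big_distrl /= sumr_const card_ord mulr_natl.
  rewrite (bigD1 i) //= eqxx big1 ?addr0 ?mul1r // => j /negPf.
  by rewrite eq_sym => ->.
under eq_bigr do rewrite sumEFin row.
by rewrite sumEFin sumr_const card_ord -[_ *+ k]mulr_natl mulrDr !mulrA.
Qed.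

(* Integrating [z <= a / a^(1/r) z^(1/r) + z^2 / (4 a)] against [mu]. *)
Lemma ge0_integral_powR_inv_ge {Z : T -> R} {r a q : R} :
  measurable_fun setT Z -> (forall x, 0 <= Z x) -> 1 <= r -> 0 < a ->
  (\int[mu]_x (Z x)%:E = a%:E)%E ->
  (\int[mu]_x (Z x * Z x)%:E <= (q * (a * a))%:E)%E ->
  (((1 - q / 4) * a `^ r^-1)%:E <= \int[mu]_x (Z x `^ r^-1)%:E)%E.
Proof.
move=> mZ Z0 r1 a0 ZE Z2E.
pose b := a `^ r^-1; have b0 : 0 < b by apply: powR_gt0.
have mZr : measurable_fun setT (fun x => Z x `^ r^-1).
  exact: measurableT_comp (measurable_powR _) mZ.
have mZZ : measurable_fun setT (fun x => Z x * Z x) by exact: measurable_funM.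
have c0 : 0 <= (4 * a)^-1 by rewrite invr_ge0 mulr_ge0 // ltW.
have ab0 : 0 <= a / b by rewrite divr_ge0 // ltW.
have integrated : (a%:E <= (a / b)%:E * \int[mu]_x (Z x `^ r^-1)%:E +
    ((4 * a)^-1)%:E * \int[mu]_x (Z x * Z x)%:E)%E.
  rewrite -ge0_integralZl_EFin //; last 2 first.
  - by move=> x _; rewrite lee_fin powR_ge0.
  - exact/measurable_EFinP.
  rewrite -ge0_integralZl_EFin //; last 2 first.
  - by move=> x _; rewrite lee_fin mulr_ge0.
  - exact/measurable_EFinP.
  rewrite -ge0_integralD //; last 4 first.
  - by move=> x _; rewrite -EFinM lee_fin mulr_ge0 ?powR_ge0.
  - exact/measurable_EFinP/measurable_funM.
  - by move=> x _; rewrite -EFinM lee_fin mulr_ge0 ?mulr_ge0.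
  - exact/measurable_EFinP/measurable_funM.
  rewrite -ZE; apply: ge0_le_integral => //.
  - by move=> x _; rewrite lee_fin.
  - exact/measurable_EFinP.
  - by apply/measurable_EFinP/measurable_funD; exact: measurable_funM.
  - by move=> x _; rewrite -!EFinM -EFinD lee_fin le_powR_inv_add_sqr_scaled.
have {}integrated : (a%:E <= (a / b)%:E * \int[mu]_x (Z x `^ r^-1)%:E +
    ((4 * a)^-1 * (q * (a * a)))%:E)%E.
  apply: (le_trans integrated); apply: leeD2l.
  by rewrite EFinM lee_wpmul2l // lee_fin.
have W0 : (0 <= \int[mu]_x (Z x `^ r^-1)%:E)%E.
  by apply: integral_ge0 => x _; rewrite lee_fin powR_ge0.
move: (\int[mu]_x _)%E W0 integrated => [w| |] // w0; last by rewrite leey.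
rewrite -EFinM -EFinD !lee_fin => integrated.
have qa : (4 * a)^-1 * (q * (a * a)) = q / 4 * a by field; rewrite gt_eqF.
rewrite qa -lerBlDr -{1}[a]mul1r -mulrBl in integrated.
have := ler_wpM2r (divr_ge0 (ltW b0) (ltW a0)) integrated.
have -> : (1 - q / 4) * a * (b / a) = (1 - q / 4) * b by field; rewrite gt_eqF.
by have -> : a / b * w * (b / a) = w by field; rewrite !gt_eqF.
Qed.

End moments.

Lemma ge0_integral_powR_lty {d} {T : measurableType d} {R : realType}
    {P : probability T R} {X : T -> R} {p q : R} :
  measurable_fun setT X -> (forall x, 0 <= X x) -> 0 <= p -> p <= q ->
  (\int[P]_x (X x `^ q)%:E < +oo)%E -> (\int[P]_x (X x `^ p)%:E < +oo)%E.
Proof.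
move=> mX X0 p0 pq Xq_fin.
have mXpow s : measurable_fun setT (fun x => X x `^ s).
  exact: measurableT_comp (measurable_powR s) mX.
apply: (@le_lt_trans _ _ (\int[P]_x (1 + X x `^ q)%:E)%E).
  apply: ge0_le_integral => //.
  - by move=> x _; rewrite lee_fin powR_ge0.
  - exact/measurable_EFinP.
  - by apply/measurable_EFinP/measurable_funD.
  - move=> x _; rewrite lee_fin; have [x1|x1] := leP (X x) 1.
    + have : X x `^ p <= 1.
        by have := @ge0_ler_powR R p p0 (X x) 1; rewrite powR1; apply; rewrite ?nnegrE.
      by move/le_trans; apply; rewrite lerDl powR_ge0.
    + have : X x `^ p <= X x `^ q by rewrite ler_powR // ltW.
      by move/le_trans; apply; rewrite lerDr.
under eq_integral do rewrite EFinD.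
rewrite ge0_integralD //.
- rewrite integral_cst // mul1e; apply: lte_add_pinfty => //.
  by apply: (le_lt_trans (probability_le1 P measurableT)); rewrite ltry.
- by move=> x _; rewrite lee_fin powR_ge0.
- exact/measurable_EFinP.
Qed.

Section iid.
Context {d : measure_display} {T : measurableType d} {R : realType}.
Context {P : probability T R} {k : nat} {Y : 'I_k -> {RV P >-> R}}.
Hypotheses (Y_indep : mutually_independent Y) (Y_ident : identically_distributed Y).

Lemma measurable_RV_powR (p : R) (i : 'I_k) :
  measurable_fun setT (fun x => Y i x `^ p).
Proof. exact: measurableT_comp (measurable_powR p) (measurable_funPT (Y i)). Qed.

Lemma iid_powR_moment (p : R) (i0 : 'I_k) :
  (\int[P]_x (Y i0 x `^ p)%:E < +oo)%E ->
  exists2 m, 0 <= m & forall i, (\int[P]_x (Y i x `^ p)%:E = m%:E)%E.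
Proof.
move=> Yp_fin; have Yp_ge0 : (0 <= \int[P]_x (Y i0 x `^ p)%:E)%E.
  by apply: integral_ge0 => x _; rewrite lee_fin powR_ge0.
exists (fine (\int[P]_x (Y i0 x `^ p)%:E)); first exact: fine_ge0.
move=> i; rewrite fineK ?ge0_fin_numE //.
exact: (ge0_integral_ident_distr i i0 (fun x => x `^ p) Y_ident
  (measurable_powR p) (fun x => powR_ge0 x p)).
Qed.

Lemma iid_sum_powR_sqr_le {r m s : R} : 0 < r ->
  (forall i, \int[P]_x (Y i x `^ r)%:E = m%:E)%E ->
  (forall i, \int[P]_x (Y i x `^ (2 * r))%:E = s%:E)%E ->
  (\int[P]_x ((\sum_(i < k) Y i x `^ r) * (\sum_(i < k) Y i x `^ r))%:E <=
   (k%:R * s + k%:R * k%:R * (m * m))%:E)%E.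
Proof.
move=> r0 mE sE; apply: ge0_integral_sum_sqr_le => [i|i x|i j].
- exact: measurable_RV_powR.
- exact: powR_ge0.
have [<-|ij] := eqVneq i j.
- have sqr x : Y i x `^ r * Y i x `^ r = Y i x `^ (2 * r).
    by rewrite mulr_natl mulr2n powRD // gt_eqF ?addr_gt0.
  under eq_integral do rewrite sqr.
  by rewrite sE lee_fin /= mul1r lerDl -expr2 sqr_ge0.
rewrite (ge0_integral_indepM i j (fun x => x `^ r)
  (fun x => x `^ r) Y_indep ij (measurable_powR r) (measurable_powR r)
  (fun x => powR_ge0 x r) (fun x => powR_ge0 x r)).
by rewrite mE mE -EFinM /= mul0r add0r.
Qed.

Lemma iid_sum_powR_root_ge {r m s q : R} : 1 <= r -> 0 < k%:R * m ->
  (forall i, \int[P]_x (Y i x `^ r)%:E = m%:E)%E ->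
  (forall i, \int[P]_x (Y i x `^ (2 * r))%:E = s%:E)%E ->
  k%:R * s + k%:R * k%:R * (m * m) <= q * (k%:R * m * (k%:R * m)) ->
  (((1 - q / 4) * (k%:R * m) `^ r^-1)%:E <=
   \int[P]_x ((\sum_(i < k) Y i x `^ r) `^ r^-1)%:E)%E.
Proof.
move=> r1 km_gt0 mE sE var_le; have r0 : 0 < r by apply: lt_le_trans r1.
have S_ge0 x : 0 <= \sum_(i < k) Y i x `^ r.
  by apply: sumr_ge0 => i _; exact: powR_ge0.
have mS : measurable_fun setT (fun x => \sum_(i < k) Y i x `^ r).
  by apply: measurable_sum => i; exact: measurable_RV_powR.
apply: ge0_integral_powR_inv_ge => //.
  by apply: ge0_integral_sum_cst mE => [i|i x]; [exact: measurable_RV_powR | exact: powR_ge0].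
by apply: le_trans (iid_sum_powR_sqr_le r0 mE sE) _; rewrite lee_fin.
Qed.

End iid.

Theorem mainTheorem12 (d : measure_display) (T : measurableType d) (R : realType)
  (P : probability T R) (r alpha : R) (k : nat) (Y : 'I_k -> {RV P >-> R})
  (i0 : 'I_k) :
  1 <= r -> 1 <= alpha ->
  mutually_independent Y -> identically_distributed Y ->
  (forall i x, 0 <= Y i x) ->
  (rnorm P (2 * r) (Y i0) < +oo)%E ->
  (rnorm P (2 * r) (Y i0) <= alpha%:E * rnorm P r (Y i0))%E ->
  4 * alpha `^ (2 * r) <= k%:R ->
  (((128 * alpha ^+ 2)^-1 * k%:R `^ r^-1)%:E * rnorm P r (Y i0) <=
   \int[P]_x ((\sum_(i < k) Y i x `^ r) `^ r^-1)%:E)%E.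
Proof.
move=> r1 a1 Y_indep Y_ident Y_ge0 Y_fin Y_norm k_large.
have r0 : 0 < r by apply: lt_le_trans r1.
have r2_gt0 : 0 < 2 * r by rewrite mulr_gt0.
have s_fin := rnorm_ge0_lty (lt0r_neq0 r2_gt0) (Y_ge0 i0) Y_fin.
have [s s0 sE] := iid_powR_moment Y_ident (2 * r) i0 s_fin.
have r_le2r : r <= 2 * r by rewrite mulr_natl mulr2n lerDr ltW.
have [m m0 mE] := iid_powR_moment Y_ident r i0
  (ge0_integral_powR_lty (measurable_funPT (Y i0)) (Y_ge0 i0) (ltW r0) r_le2r s_fin).
rewrite (rnorm_ge0_EFin (lt0r_neq0 r0) (Y_ge0 i0) (mE i0)) in Y_norm *.
rewrite (rnorm_ge0_EFin (lt0r_neq0 r2_gt0) (Y_ge0 i0) (sE i0)) -EFinM lee_fin in Y_norm.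
have s_le : s <= alpha `^ (2 * r) * (m * m).
  exact: powR_le_sqr_of_powR_inv_le s0 m0 (le_trans ler01 a1) r0 Y_norm.
have [->|m_neq0] := eqVneq m 0.
  rewrite powR0 ?invr_neq0 ?gt_eqF // mule0.
  by apply: integral_ge0 => x _; rewrite lee_fin powR_ge0.
have k_gt0 : 0 < k%:R :> R by rewrite ltr0n (leq_ltn_trans _ (ltn_ord i0)).
have km_gt0 : 0 < k%:R * m by rewrite mulr_gt0 // lt_neqAle eq_sym m_neq0.
apply: le_trans (iid_sum_powR_root_ge Y_indep r1 km_gt0 mE sE
  (second_moment_sum_le (ltW k_gt0) s_le k_large)).
rewrite -EFinM lee_fin -mulrA -powRM ?(ltW k_gt0) // ler_wpM2r ?powR_ge0 //.
exact: inv_128_sqr_le.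
Qed.
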